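(* Let $G=(V,E)$ be a simple graph with $n$ vertices, $m$ edges, maximum degree $\Delta$ and arboricity $\alpha$, and let $\frac{1}{\alpha}\leq\varepsilon<1$. Procedure Arboricity Edge-Coloring with parameter $h=\max\{\lfloor\log(\varepsilon\alpha/3)\rfloor,0\}$ computes a proper edge-coloring of $G$ using at most $\Delta+\varepsilon\alpha$ colors in $O\left(\frac{m\log n}{\varepsilon^{7}}\right)$ deterministic time. Its randomized version requires $O\left(\frac{m\log n}{\varepsilon}\right)$ expected time.
   Context: Logarithms are base 2. The arboricity of $G$ is $\alpha(G)=\max_{S\subseteq V,|S|\ge2}\lceil |E(G[S])|/(|S|-1)\rceil$. A proper $k$-edge-coloring is a map $\varphi:E\to\{1,\dots,k\}$ assigning distinct colors to distinct edges sharing an endpoint. An orientation $\mu$ assigns a direction to each edge; $\mathrm{indeg}(v)$, $\mathrm{outdeg}(v)$ are the in/out-degrees. An oriented degree-splitting of $(G,\mu)$ with discrepancy $\kappa$ is a partition $(E_1,E_2)$ of $E$ such that for every vertex $v$, the numbers of incoming edges of $v$ in $E_1$ and in $E_2$ differ by at most $\kappa$, and the numbers of outgoing edges of $v$ in $E_1$ and in $E_2$ differ by at most $\kappa$. Procedure Forests-Decomposition Orientation$(G)$: starting from $\mathcal A=V$, repeatedly pick $v\in\mathcal A$ of minimum degree in $G[\mathcal A]$, orient every edge from $v$ to its neighbours in $\mathcal A$, and remove $v$ from $\mathcal A$, until $\mathcal A=\emptyset$. Procedure Oriented Edge-Coloring$(G,\mu,h)$: if $h=0$, return a proper $(\Delta(G)+1)$-edge-coloring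 of (the undirected) $G$ computed by a base-case subroutine. Otherwise compute an oriented degree-splitting $(E_1,E_2)$ of $(G,\mu)$ with discrepancy at most 1 (computable in $O(|E|)$ time), let $G_1=(V,E_1)$, $G_2=(V,E_2)$ with the orientation induced by $\mu$, recursively compute $\varphi_1=$ Oriented Edge-Coloring$(G_1,\mu,h-1)$, $\varphi_2=$ Oriented Edge-Coloring$(G_2,\mu,h-1)$, and return $\varphi(e)=\varphi_1(e)$ on $E_1$ and $\varphi(e)=p_1+\varphi_2(e)$ on $E_2$, where $p_1$ is the palette size of $\varphi_1$. Procedure Arboricity Edge-Coloring$(G,h)$: compute $\mu=$ Forests-Decomposition Orientation$(G)$ and return Oriented Edge-Coloring$(G,\mu,h)$. Deterministic version: the base-case subroutine is a deterministic algorithm computing a proper $(\Delta'+1)$-edge-coloring of an $n'$-vertex $m'$-edge graph with maximum degree $\Delta'$ and arboricity $\alpha'$ in $O(m'\alpha'^7\log n')$ time. Randomized version: the base-case subroutine is a randomized algorithm computing a proper $(\Delta'+1)$-edge-coloring in expected $O(m'\alpha'\log n')$ time. *)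

From mathcomp Require Import all_boot.
From Stdlib Require Import Reals.
Import ssrnat.

Set Implicit Arguments.
Unset Strict Implicit.
Unset Printing Implicit Defensive.

(* A simple graph on the finite vertex type V is given by its edge set:
   a set of 2-element subsets of V. *)
Section Graphs.
Variable V : finType.
Implicit Types (E : {set {set V}}) (e : {set V}) (v : V).

Definition simple_graph E : Prop := forall e, e \in E -> #|e| = 2.

Definition deg E v : nat := #|[set e in E | v \in e]|.

Definition max_deg E : nat := \max_(v : V) deg E v.

Definition induced_edges E (S : {set V}) : {set {set V}} :=
  [set e in E | e \subset S].

Definition ceil_div (a b : nat) : nat := (a + b.-1) %/ b.

Definition arboricity E : nat :=
  \max_(S : {set V} | 2 <= #|S|) ceil_div #|induced_edges E S| (#|S| - 1).

Definition proper_edge_coloring E (phi : {set V} -> nat) (k : nat) : Prop :=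
  (forall e, e \in E -> 1 <= phi e <= k) /\
  (forall e f, e \in E -> f \in E -> e != f -> e :&: f != set0 -> phi e != phi f).

(* An orientation mu assigns to every edge its tail (source) vertex mu e,
   the edge being directed from mu e to the other endpoint. *)
Definition orientation E (mu : {set V} -> V) : Prop :=
  forall e, e \in E -> mu e \in e.

Definition indeg E (mu : {set V} -> V) v : nat :=
  #|[set e in E | (v \in e) && (mu e != v)]|.
Definition outdeg E (mu : {set V} -> V) v : nat :=
  #|[set e in E | (v \in e) && (mu e == v)]|.

Definition oriented_splitting E (mu : {set V} -> V) (E1 E2 : {set {set V}}) : Prop :=
  E1 :|: E2 = E /\ E1 :&: E2 = set0 /\
  (forall v, indeg E1 mu v <= indeg E2 mu v + 1 /\ indeg E2 mu v <= indeg E1 mu v + 1) /\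
  (forall v, outdeg E1 mu v <= outdeg E2 mu v + 1 /\ outdeg E2 mu v <= outdeg E1 mu v + 1).

Definition deg_in E (A : seq V) v : nat :=
  #|[set e in E | (v \in e) && all (fun x => x \in A) (enum e)]|.

(* Procedure Forests-Decomposition Orientation: s is the order in which vertices
   are removed from the active set (A_i = drop i s); each removed vertex has
   minimum degree in G[A_i]; every edge is oriented from the endpoint removed
   first towards the other one.  Ties are resolved arbitrarily. *)
Definition fdo_order E (s : seq V) : Prop :=
  perm_eq s (enum V) /\
  forall i, i < size s -> forall u, u \in drop i s ->
    deg_in E (drop i s) (nth u s i) <= deg_in E (drop i s) u.

Definition fdo_orientation E (mu : {set V} -> V) : Prop :=
  exists s, fdo_order E s /\ orientation E mu /\
    forall e, e \in E -> forall x, x \in e -> index (mu e) s <= index x s.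

(* Procedure Oriented Edge-Coloring(G, mu, h), as a relation between inputs
   (E, h) and possible outcomes (phi, palette size p, running time c).
   [bc E] is the running time of the base-case subroutine on (V,E);
   [sc E] is the running time of the non-recursive work of one recursive call
   (computing the splitting and combining the colorings). *)
Inductive oec (sc bc : {set {set V}} -> R) (mu : {set V} -> V) :
  {set {set V}} -> nat -> ({set V} -> nat) -> nat -> R -> Prop :=
| oec_base E phi :
    proper_edge_coloring E phi (max_deg E).+1 ->
    oec sc bc mu E 0 phi (max_deg E).+1 (bc E)
| oec_step E h E1 E2 phi1 p1 c1 phi2 p2 c2 :
    oriented_splitting E mu E1 E2 ->
    oec sc bc mu E1 h phi1 p1 c1 ->
    oec sc bc mu E2 h phi2 p2 c2 ->
    oec sc bc mu E h.+1 (fun e => if e \in E1 then phi1 e else p1 + phi2 e)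
        (p1 + p2) (sc E + c1 + c2)%R.

End Graphs.

(* Procedure Arboricity Edge-Coloring(G, h): a possible run with output coloring
   phi, palette size p and total running time t; [oc E] is the running time of
   Forests-Decomposition Orientation. *)
Definition aec_run (oc sc bc : forall V : finType, {set {set V}} -> R)
  (V : finType) (E : {set {set V}}) (h : nat) (phi : {set V} -> nat) (p : nat) (t : R) : Prop :=
  exists mu, fdo_orientation E mu /\
    exists c, oec (sc V) (bc V) mu E h phi p c /\ t = (oc V E + c)%R.

Definition log2 (x : R) : R := (ln x / ln 2)%R.

Definition h_param (eps : R) (alpha : nat) : nat :=
  Z.to_nat (Z.max (Int_part (log2 (eps * INR alpha / 3))) 0).

(* The Forests-Decomposition orientation has out-degree at most 2 alpha: the
   vertex removed from G[A] has minimum degree there, and G[A] has at most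
   alpha (|A| - 1) edges.  A degree-splitting with discrepancy 1 halves in- and
   out-degrees up to +1, so 2 Delta(E_i) <= Delta(E) + 2 and, by induction on h,
   the palette has at most Delta + 3 2^h - 2 <= Delta + eps alpha colours.  After
   h halvings the out-degree, hence the arboricity, of every base-case graph is
   O(alpha / 2^h) = O(1 / eps), so the base cases cost O(m eps^-7 log n)
   (resp. O(m eps^-1 log n)) altogether, while each of the h <= log n levels of
   splitting costs O(m). *)

From mathcomp Require Import all_boot zify.
From Stdlib Require Import Reals Lra.
Import ssrnat. (* [Reals] rebinds [^] on [nat] to [Nat.pow]. *)

Set Implicit Arguments.
Unset Strict Implicit.
Unset Printing Implicit Defensive.

Lemma card_sep_partition (T : finType) (A A1 A2 : {set T}) (P : pred T) :
  A1 :|: A2 = A -> A1 :&: A2 = set0 ->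
  #|[set x in A | P x]| = #|[set x in A1 | P x]| + #|[set x in A2 | P x]|.
Proof.
move=> <- disj; rewrite !setIdE -cardsUI setIUl.
suff -> : A1 :&: [set x | P x] :&: (A2 :&: [set x | P x]) = set0 by rewrite cards0 addn0.
by rewrite setIACA setIid disj set0I.
Qed.

Lemma card_sep_sum (T : finType) (A : {pred T}) (P : pred T) :
  #|[set x in A | P x]| = \sum_(x in A) P x.
Proof. by rewrite -sum1dep_card big_mkcondr; apply: eq_bigr => x _; case: (P x). Qed.

Lemma leq_ceil_divLR a b c : 0 < b -> (ceil_div a b <= c) = (a <= c * b).
Proof. by move=> b_gt0; rewrite /ceil_div -ltnS ltn_divLR //; lia. Qed.

Lemma mem_drop_index (T : eqType) (s : seq T) i x :
  x \in s -> i <= index x s -> x \in drop i s.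
Proof.
move=> xs le_i; rewrite -(nth_index x xs) -(subnKC le_i) -nth_drop mem_nth //.
by rewrite size_drop; have := index_mem x s; rewrite xs; lia.
Qed.

Lemma double_bigmax_le (I : finType) (F : I -> nat) M :
  (forall i, (F i).*2 <= M) -> (\max_i F i).*2 <= M.
Proof.
move=> FM; apply: (big_ind (fun x => x.*2 <= M)) => // x y.
by rewrite /maxn; case: ifP.
Qed.

Lemma leq_INR (m n : nat) : m <= n -> (INR m <= INR n)%R.
Proof. by move/leP; exact: le_INR. Qed.

Lemma INR_expn m n : INR (m ^ n) = (INR m ^ n)%R.
Proof. by elim: n => [|n IH]; rewrite ?expnS ?mult_INR ?IH. Qed.

Section Graph.
Variable V : finType.
Implicit Types (E F : {set {set V}}) (S : {set V}) (mu : {set V} -> V).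

Definition max_outdeg E mu : nat := \max_(v : V) outdeg E mu v.

Lemma outdeg_le_max E mu v : outdeg E mu v <= max_outdeg E mu.
Proof. exact: (@leq_bigmax _ (fun v => outdeg E mu v)). Qed.

Lemma deg_indeg_outdeg E mu v : deg E v = indeg E mu v + outdeg E mu v.
Proof.
rewrite /deg /indeg /outdeg !card_sep_sum -big_split; apply: eq_bigr => e _.
by case: (v \in e); case: (mu e == v).
Qed.

Lemma sum_deg E : simple_graph E -> \sum_v deg E v = (#|E|).*2.
Proof.
move=> simpleE; rewrite -muln2 -sum_nat_const.
under eq_bigr => v _ do rewrite /deg card_sep_sum.
rewrite exchange_big; apply: eq_bigr => e eE.
by rewrite -(simpleE e eE) -sum1_card [RHS]big_mkcond; apply: eq_bigr => v _; case: (v \in e).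
Qed.

Lemma arboricity_le E c :
  (forall S, 2 <= #|S| -> #|induced_edges E S| <= c * (#|S| - 1)) ->
  arboricity E <= c.
Proof. by move=> ind; apply/bigmax_leqP => S S2; rewrite leq_ceil_divLR ?ind //; lia. Qed.

Lemma card_induced_edges_le E S : simple_graph E ->
  #|induced_edges E S| <= arboricity E * (#|S| - 1).
Proof.
move=> simpleE; have [S2|] := leqP 2 #|S|.
  rewrite -leq_ceil_divLR; last lia.
  exact: (@leq_bigmax_cond _ (fun S => 2 <= #|S|)
           (fun S => ceil_div #|induced_edges E S| (#|S| - 1)) S).
rewrite ltnS => S1; suff -> : induced_edges E S = set0 by rewrite cards0.
apply/setP => e; rewrite !inE; apply/negbTE; apply/andP => -[eE /subset_leq_card].
by rewrite (simpleE e eE); lia.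
Qed.

Lemma card_ge2_of_arboricity E : 0 < arboricity E -> 2 <= #|V|.
Proof.
apply: contraTT; rewrite -!leqNgt leqn0 => V1; apply/eqP/eqP; rewrite -leqn0.
by apply: arboricity_le => S S2; have := max_card S; lia.
Qed.

Lemma arboricity_le_card E : simple_graph E -> arboricity E <= #|V|.
Proof.
move=> simpleE; apply: arboricity_le => S S2.
have : #|induced_edges E S| <= 'C(#|S|, 2).
  rewrite -cards_draws; apply: subset_leq_card; apply/subsetP => e.
  by rewrite !inE => /andP [eE ->]; rewrite simpleE.
rewrite bin2 -divn2; have := leq_div (#|S| * #|S|.-1) 2; have := max_card S; nia.
Qed.

Lemma card_induced_edges_le_outdeg E mu S : orientation E mu ->
  #|induced_edges E S| <= \sum_(v in S) outdeg E mu v.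
Proof.
move=> muE; rewrite -sum1_card (partition_big mu (mem S)) /=; last first.
  by move=> e; rewrite inE => /andP [eE /subsetP]; apply; exact: muE.
apply: leq_sum => v _; rewrite sum1dep_card; apply: subset_leq_card.
apply/subsetP => e; rewrite !inE => /andP [/andP [eE _] /eqP <-].
by rewrite eE muE ?eqxx.
Qed.

Lemma arboricity_le_outdeg E mu : orientation E mu ->
  arboricity E <= (max_outdeg E mu).*2.
Proof.
move=> muE; apply: arboricity_le => S S2.
apply: leq_trans (card_induced_edges_le_outdeg S muE) _.
apply: leq_trans (_ : \sum_(v in S) max_outdeg E mu <= _).
  by apply: leq_sum => v _; exact: outdeg_le_max.
rewrite sum_nat_const; nia.
Qed.

Lemma simple_graph_sub E F : simple_graph E -> F \subset E -> simple_graph F.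
Proof. by move=> simpleE /subsetP FE e /FE; exact: simpleE. Qed.

Lemma deg_in_induced E (A : seq V) v :
  deg_in E A v = deg (induced_edges E [set x in A]) v.
Proof.
apply: eq_card => e; rewrite !inE [in RHS]andbAC -andbA; congr (_ && (_ && _)).
apply/allP/subsetP => [inA x xe | subA x]; last by rewrite mem_enum => /subA; rewrite inE.
by rewrite inE; apply: inA; rewrite mem_enum.
Qed.

Lemma min_deg_induced_le E S u : simple_graph E -> u \in S ->
  (forall w, w \in S -> deg (induced_edges E S) u <= deg (induced_edges E S) w) ->
  deg (induced_edges E S) u <= (arboricity E).*2.
Proof.
move=> simpleE uS umin; set F := induced_edges E S.
have simpleF : simple_graph F.
  by apply: simple_graph_sub simpleE _; apply/subsetP => e; rewrite inE => /andP [].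
have sum_le : #|S| * deg F u <= (#|F|).*2.
  rewrite -(sum_deg simpleF); apply: leq_trans (_ : \sum_(w in S) deg F w <= _).
    by rewrite -sum_nat_const; apply: leq_sum => w; exact: umin.
  by rewrite [X in _ <= X](bigID (mem S)) /= leq_addr.
have S_gt0 : 0 < #|S| by apply/card_gt0P; exists u.
rewrite -(leq_pmul2l S_gt0); apply: leq_trans sum_le _.
rewrite -doubleMr leq_double mulnC; apply: leq_trans (card_induced_edges_le S simpleE) _.
by rewrite leq_mul2l leq_subr orbT.
Qed.

Lemma fdo_max_outdeg_le E mu : simple_graph E -> fdo_orientation E mu ->
  max_outdeg E mu <= (arboricity E).*2.
Proof.
move=> simpleE [s [[perm_s smin] [muE mu_first]]]; apply/bigmax_leqP => v _.
have in_s x : x \in s by rewrite (perm_mem perm_s) mem_enum.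
set i := index v s; set A := drop i s.
have vA : v \in A by rewrite /A drop_index ?in_s // mem_head.
have out_le : outdeg E mu v <= deg (induced_edges E [set x in A]) v.
  apply: subset_leq_card; apply/subsetP => e; rewrite !inE => /and3P [eE ve /eqP mu_v].
  rewrite eE ve andbT; apply/subsetP => x xe; rewrite inE mem_drop_index // /i -mu_v.
  exact: mu_first.
apply: leq_trans out_le (min_deg_induced_le simpleE _ _); first by rewrite inE.
move=> w; rewrite inE -!deg_in_induced => wA.
by rewrite -{1}(nth_index w (in_s v)); apply: smin; rewrite // index_mem.
Qed.

Section Splitting.
Variables (E E1 E2 : {set {set V}}) (mu : {set V} -> V).
Hypothesis E_split : oriented_splitting E mu E1 E2.

Lemma oriented_splitting_sym : oriented_splitting E mu E2 E1.
Proof.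
case: E_split => U [I [din dout]]; rewrite /oriented_splitting setUC setIC.
by do 3!split=> //; move=> v; [case: (din v) | case: (dout v)].
Qed.

Lemma splitting_subset : E1 \subset E.
Proof. by case: E_split => <- _; exact: subsetUl. Qed.

Lemma card_splitting : #|E| = #|E1| + #|E2|.
Proof. by case: E_split => <- [I _]; rewrite -cardsUI I cards0 addn0. Qed.

Lemma outdeg_splitting_le v : (outdeg E1 mu v).*2 <= outdeg E mu v + 1.
Proof.
case: E_split => U [I [_ dout]]; move: (dout v).
by rewrite /outdeg (card_sep_partition _ U I); lia.
Qed.

Lemma deg_splitting_le v : (deg E1 v).*2 <= deg E v + 2.
Proof.
case: E_split => U [I [din dout]]; move: (din v) (dout v).
rewrite !(deg_indeg_outdeg _ mu) /indeg /outdeg !(card_sep_partition _ U I); lia.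
Qed.

Lemma max_deg_splitting_le : (max_deg E1).*2 <= max_deg E + 2.
Proof.
apply: double_bigmax_le => v; apply: leq_trans (deg_splitting_le v) _.
by rewrite leq_add2r; exact: (@leq_bigmax _ (fun v => deg E v)).
Qed.

Lemma max_outdeg_splitting_le : (max_outdeg E1 mu).*2 <= max_outdeg E mu + 1.
Proof.
apply: double_bigmax_le => v; apply: leq_trans (outdeg_splitting_le v) _.
by rewrite leq_add2r outdeg_le_max.
Qed.

Lemma proper_edge_coloring_splitting phi1 p1 phi2 p2 :
  proper_edge_coloring E1 phi1 p1 -> proper_edge_coloring E2 phi2 p2 ->
  proper_edge_coloring E (fun e => if e \in E1 then phi1 e else p1 + phi2 e) (p1 + p2).
Proof.
case: E_split => U [I _] [range1 proper1] [range2 proper2].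
have in2 e : e \in E -> e \notin E1 -> e \in E2 by rewrite -U inE => /orP [->|].
split=> [e eE | e f eE fE ef ef_meet].
  by case: ifPn => [/range1 | /(in2 e eE) /range2]; lia.
case: ifPn => [e1 | /(in2 e eE) e2]; case: ifPn => [f1 | /(in2 f fE) f2].
- exact: proper1.
- by move: (range1 e e1) (range2 f f2) => ? ?; apply/eqP; lia.
- by move: (range1 f f1) (range2 e e2) => ? ?; apply/eqP; lia.
- by rewrite eqn_add2l; exact: proper2.
Qed.

End Splitting.

Section OrientedEdgeColoring.
Variables (sc bc : {set {set V}} -> R) (mu : {set V} -> V).

Lemma oec_proper E h phi p c :
  oec sc bc mu E h phi p c -> proper_edge_coloring E phi p.
Proof.
elim=> {E h phi p c} // E h E1 E2 phi1 p1 c1 phi2 p2 c2 E_split _ proper1 _ proper2.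
exact (proper_edge_coloring_splitting E_split proper1 proper2).
Qed.

Lemma oec_palette_le E h phi p c :
  oec sc bc mu E h phi p c -> p + 2 <= max_deg E + 3 * 2 ^ h.
Proof.
elim=> {E h phi p c} [E phi _ | E h E1 E2 phi1 p1 c1 phi2 p2 c2 E_split _ pal1 _ pal2].
  by rewrite expn0; lia.
have := max_deg_splitting_le E_split; have := max_deg_splitting_le (oriented_splitting_sym E_split).
by rewrite expnS; lia.
Qed.

(* The invariant [d + 2^h <= 2^h b + 1] on the maximum out-degree [d] is
   preserved by [d |-> (d + 1) / 2, h |-> h - 1] and reads [d <= b] at h = 0. *)
Lemma oec_cost_le E0 (cs Q : R) (b : nat) :
  (forall E, E \subset E0 -> (sc E <= cs * INR #|E|)%R) ->
  (forall E, E \subset E0 -> max_outdeg E mu <= b -> (bc E <= Q * INR #|E|)%R) ->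
  forall E h phi p c, oec sc bc mu E h phi p c -> E \subset E0 ->
  max_outdeg E mu + 2 ^ h <= 2 ^ h * b + 1 ->
  (c <= (cs * INR h + Q) * INR #|E|)%R.
Proof.
move=> sc_le bc_le E h phi p c.
elim=> {E h phi p c} [E phi _ | E h E1 E2 phi1 p1 c1 phi2 p2 c2 E_split _ cost1 _ cost2] E_sub.
  by rewrite expn0 mul1n leq_add2r => /(bc_le E E_sub); rewrite /=; lra.
move=> out_le; have E_split' := oriented_splitting_sym E_split.
have := max_outdeg_splitting_le E_split; have := max_outdeg_splitting_le E_split'.
rewrite expnS in out_le => out_le2 out_le1.
have {}cost1 := cost1 (subset_trans (splitting_subset E_split) E_sub) ltac:(nia).
have {}cost2 := cost2 (subset_trans (splitting_subset E_split') E_sub) ltac:(nia).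
have := sc_le E E_sub; rewrite (card_splitting E_split) plus_INR S_INR; lra.
Qed.

End OrientedEdgeColoring.

End Graph.

Local Open Scope R_scope.

Lemma one_le_mul_of_inv_le a eps : 0 < a -> / a <= eps -> 1 <= eps * a.
Proof.
move=> a_gt0 le_eps; have := Rmult_le_compat_r a _ _ (Rlt_le _ _ a_gt0) le_eps.
by rewrite Rinv_l //; lra.
Qed.

Lemma ln2_gt0 : 0 < ln 2.
Proof. by have := ln_lt_2; lra. Qed.

Lemma log2_pow2 n : log2 (2 ^ n) = INR n.
Proof. by rewrite /log2 ln_pow; [field; have := ln2_gt0; lra | lra]. Qed.

Lemma log2_lt x y : 0 < x -> 0 < y -> (log2 x < log2 y <-> x < y).
Proof.
move=> x_gt0 y_gt0; have ln2_inv := Rinv_0_lt_compat _ ln2_gt0; rewrite /log2 /Rdiv.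
split=> [lt_xy | lt_xy].
  by apply: ln_lt_inv => //; apply: Rmult_lt_reg_r lt_xy.
by apply: Rmult_lt_compat_r => //; exact: ln_increasing.
Qed.

Lemma log2_le x y : 0 < x -> 0 < y -> (log2 x <= log2 y <-> x <= y).
Proof.
move=> x_gt0 y_gt0; split=> le_xy; apply: Rnot_lt_le => /(log2_lt _ _) lt_yx.
  by apply: (Rle_not_lt _ _ le_xy); apply/lt_yx.
by apply: (Rle_not_lt _ _ le_xy); apply/lt_yx.
Qed.

Lemma h_param_spec eps a : 0 < eps * INR a ->
  2 ^ h_param eps a <= Rmax 1 (eps * INR a / 3) /\
  eps * INR a / 3 < 2 * 2 ^ h_param eps a.
Proof.
rewrite /h_param; set x := eps * INR a / 3 => ea_gt0.
have x_gt0 : 0 < x by rewrite /x; lra.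
have [floor_le floor_gt] := base_Int_part (log2 x).
have [z_ge0 | z_lt0] := Z.le_gt_cases 0 (Int_part (log2 x)).
  rewrite Z.max_l //; set h := Z.to_nat _.
  have h_eq : INR h = IZR (Int_part (log2 x)) by rewrite INR_IZR_INZ Znat.Z2Nat.id.
  have pow_gt0 n : 0 < 2 ^ n by apply: pow_lt; lra.
  split; first apply: Rle_trans (Rmax_r 1 x).
    by apply/log2_le => //; rewrite log2_pow2; lra.
  by rewrite -[2 * 2 ^ h]/(2 ^ h.+1); apply/log2_lt => //; rewrite log2_pow2 S_INR; lra.
rewrite Z.max_r; last by apply: Z.lt_le_incl.
split; first exact: Rmax_l.
have z_le : IZR (Int_part (log2 x)) <= -1 by apply: IZR_le; lia.
rewrite /= Rmult_1_r -(pow_1 2); apply/log2_lt => //; first lra.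
by rewrite log2_pow2 /=; lra.
Qed.

Lemma h_param_palette_le eps a : 1 <= eps * INR a -> 3 * 2 ^ h_param eps a <= eps * INR a + 2.
Proof.
move=> ea_ge1; have ea_gt0 : 0 < eps * INR a by lra.
by have [/Rmax_Rle [] le_h _] := h_param_spec ea_gt0; lra.
Qed.

Lemma lt_pow2_h_param eps a : 0 < eps * INR a -> eps * INR a < 6 * 2 ^ h_param eps a.
Proof. by move=> /h_param_spec [_]; lra. Qed.

Lemma pow2_h_param_le eps a : 1 <= eps * INR a -> eps < 1 -> 2 ^ h_param eps a <= INR a.
Proof.
move=> ea_ge1 eps_lt1; have a_ge0 := pos_INR a; have ea_gt0 : 0 < eps * INR a by lra.
by have [/Rmax_Rle [] le_h _] := h_param_spec ea_gt0; nra.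
Qed.

Lemma leaf_arboricity_le eps a : 1 <= eps * INR a -> eps < 1 ->
  INR ((a.*2 %/ 2 ^ h_param eps a + 2).*2) <= 28 / eps.
Proof.
move=> ea_ge1 eps_lt1; set h := h_param eps a; set q := a.*2 %/ 2 ^ h.
have eps_gt0 : 0 < eps by have := pos_INR a; nra.
have pow_gt0 : 0 < 2 ^ h by apply: pow_lt; lra.
have q_le : INR q * 2 ^ h <= 2 * INR a.
  have := leq_INR (leq_divM a.*2 (2 ^ h)).
  by rewrite -/q mult_INR INR_expn -addnn plus_INR (_ : INR 2 = 2) /=; lra.
have ea_gt0 : 0 < eps * INR a by lra.
have lt_a := lt_pow2_h_param ea_gt0; rewrite -/h in lt_a.
have q_lt : INR q * eps < 12.
  by apply: (Rmult_lt_reg_r (2 ^ h)) => //; nra.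
rewrite -addnn !plus_INR (_ : INR 2 = 2) //; apply: (Rmult_le_reg_r eps) => //.
by rewrite /Rdiv Rmult_assoc Rinv_l; lra.
Qed.

Lemma base_cost_le cb m a A L : 0 <= m -> 0 <= a <= A -> 0 <= L ->
  cb * m * a * L <= Rmax cb 0 * A * L * m.
Proof.
move=> m_ge0 [a_ge0 a_le] L_ge0; have cb_le := Rmax_l cb 0; have cb_ge0 := Rmax_r cb 0.
have : 0 <= m * a * L by apply: Rmult_le_pos => //; exact: Rmult_le_pos.
have : 0 <= Rmax cb 0 * m * L by apply: Rmult_le_pos => //; exact: Rmult_le_pos.
nra.
Qed.

Lemma cost_combine co cs cb K Z L h m C :
  0 < Z <= 1 -> 0 <= K -> 0 <= m -> 0 <= h <= L -> 1 <= L ->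
  Rmax co 0 + Rmax cs 0 + Rmax cb 0 * K <= C ->
  co * m + (cs * h + Rmax cb 0 * (K / Z) * L) * m <= C * (m * L / Z).
Proof.
move=> [Z_gt0 Z_le1] K_ge0 m_ge0 [h_ge0 h_le] L_ge1 C_ge.
have invZ_ge1 : 1 <= / Z by rewrite -Rinv_1; apply: Rinv_le_contravar.
set X := m * L * / Z.
have mL_ge0 : 0 <= m * L by nra.
have mL_le : m * L <= X by rewrite /X; nra.
have X_ge0 : 0 <= X by nra.
have mX : m <= X by nra.
have co_le : co * m <= Rmax co 0 * X.
  have := Rmax_l co 0; have := Rmax_r co 0 => co_ge0 co_le.
  have : co * m <= Rmax co 0 * m by nra.
  nra.
have cs_le : cs * h * m <= Rmax cs 0 * X.
  have := Rmax_l cs 0; have := Rmax_r cs 0 => cs_ge0 cs_le.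
  have : cs * h <= Rmax cs 0 * L by nra.
  nra.
have C_le : (Rmax co 0 + Rmax cs 0 + Rmax cb 0 * K) * X <= C * X by nra.
have -> : (cs * h + Rmax cb 0 * (K / Z) * L) * m = cs * h * m + Rmax cb 0 * K * X.
  by rewrite /X /Rdiv; ring.
by rewrite /Rdiv -/X; lra.
Qed.

Section Runs.
Variables (V : finType) (oc sc bc : forall V : finType, {set {set V}} -> R).
Implicit Types (E : {set {set V}}) (phi : {set V} -> nat).

Lemma aec_run_colors E eps phi p t :
  (0 < arboricity E)%N -> / INR (arboricity E) <= eps ->
  aec_run oc sc bc E (h_param eps (arboricity E)) phi p t ->
  exists k, proper_edge_coloring E phi k /\
            INR k <= INR (max_deg E) + eps * INR (arboricity E).
Proof.
move=> a_gt0 eps_ge [mu [_ [c [run _]]]]; exists p; split; first exact: oec_proper run.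
have := h_param_palette_le (one_le_mul_of_inv_le (lt_0_INR _ (ltP a_gt0)) eps_ge).
have := leq_INR (oec_palette_le run); rewrite 2!plus_INR mult_INR INR_expn (_ : INR 2 = 2) //=.
lra.
Qed.

Lemma aec_run_cost_le E h phi p t co cs Q :
  simple_graph E -> oc E <= co * INR #|E| ->
  (forall E', simple_graph E' -> sc E' <= cs * INR #|E'|) ->
  (forall E', E' \subset E ->
     (arboricity E' <= ((arboricity E).*2 %/ 2 ^ h + 2).*2)%N -> bc E' <= Q * INR #|E'|) ->
  aec_run oc sc bc E h phi p t ->
  t <= co * INR #|E| + (cs * INR h + Q) * INR #|E|.
Proof.
move=> simpleE oc_le sc_le bc_le [mu [fdo [c [run ->]]]].
have muE : orientation E mu by case: fdo => s [_ []].
suff : c <= (cs * INR h + Q) * INR #|E| by lra.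
apply: (oec_cost_le (E0 := E) (b := (arboricity E).*2 %/ 2 ^ h + 2)) run (subxx E) _.
- by move=> E' /(simple_graph_sub simpleE); exact: sc_le.
- move=> E' sub out_le; apply: bc_le => //.
  have muE' : orientation E' mu by move=> e /(subsetP sub); exact: muE.
  by apply: leq_trans (arboricity_le_outdeg muE') _; rewrite leq_double.
have := fdo_max_outdeg_le simpleE fdo.
have := ltn_ceil (arboricity E).*2 (expn_gt0 2 h); nia.
Qed.

Lemma log2_card_bounds E eps : simple_graph E -> (0 < arboricity E)%N ->
  / INR (arboricity E) <= eps < 1 ->
  1 <= log2 (INR #|V|) /\ INR (h_param eps (arboricity E)) <= log2 (INR #|V|).
Proof.
move=> simpleE a_gt0 [eps_ge eps_lt1].
have ea_ge1 := one_le_mul_of_inv_le (lt_0_INR _ (ltP a_gt0)) eps_ge.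
have := leq_INR (card_ge2_of_arboricity a_gt0); rewrite (_ : INR 2 = 2) // => n_ge2.
have a_le_n := leq_INR (arboricity_le_card simpleE).
have pow_gt0 n : 0 < 2 ^ n by apply: pow_lt; lra.
split; last first.
  rewrite -log2_pow2; apply/log2_le => //; first lra.
  by have := pow2_h_param_le ea_ge1 eps_lt1; lra.
have <- : log2 2 = 1 by rewrite /log2 /Rdiv Rinv_r //; have := ln2_gt0; lra.
by apply/log2_le; lra.
Qed.

Lemma aec_run_time_le E eps phi p t co cs cb (k : nat) C :
  simple_graph E -> (0 < arboricity E)%N -> / INR (arboricity E) <= eps < 1 ->
  oc E <= co * INR #|E| ->
  (forall E', simple_graph E' -> sc E' <= cs * INR #|E'|) ->
  (forall E', simple_graph E' ->
     bc E' <= cb * INR #|E'| * INR (arboricity E') ^ k * log2 (INR #|V|)) ->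
  Rmax co 0 + Rmax cs 0 + Rmax cb 0 * 28 ^ k <= C ->
  aec_run oc sc bc E (h_param eps (arboricity E)) phi p t ->
  t <= C * (INR #|E| * log2 (INR #|V|) / eps ^ k).
Proof.
move=> simpleE a_gt0 eps_range oc_le sc_le bc_le C_ge run.
have [eps_ge eps_lt1] := eps_range.
have ea_ge1 := one_le_mul_of_inv_le (lt_0_INR _ (ltP a_gt0)) eps_ge.
have eps_gt0 : 0 < eps by have := pos_INR (arboricity E); nra.
have [L_ge1 h_le_L] := log2_card_bounds simpleE a_gt0 eps_range.
apply: Rle_trans (aec_run_cost_le (Q := Rmax cb 0 * (28 ^ k / eps ^ k) * log2 (INR #|V|))
                   simpleE oc_le sc_le _ run) _.
  move=> E' sub /leq_INR arb_le.
  apply: Rle_trans (bc_le E' (simple_graph_sub simpleE sub)) _.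
  apply: base_cost_le; [exact: pos_INR | split; first by apply: pow_le; exact: pos_INR | lra].
  rewrite /Rdiv -pow_inv -Rpow_mult_distr; apply: pow_incr; split; first exact: pos_INR.
  exact: Rle_trans arb_le (leaf_arboricity_le ea_ge1 eps_lt1).
apply: cost_combine => //; last by split; [exact: pos_INR | lra].
- by split; [apply: pow_lt | rewrite -(pow1 k); apply: pow_incr]; lra.
- by apply: pow_le; lra.
- exact: pos_INR.
Qed.

End Runs.

Local Close Scope R_scope.

Theorem theorem4p16 :
  forall (oc sc bcd bcr : forall V : finType, {set {set V}} -> R) (co cs cd cr : R),
  (* Forests-Decomposition Orientation runs in O(m) time *)
  (forall (V : finType) (E : {set {set V}}), simple_graph E ->
     (oc V E <= co * INR #|E|)%R) ->
  (* degree-splitting (and recombination) runs in O(|E|) time *)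
  (forall (V : finType) (E : {set {set V}}), simple_graph E ->
     (sc V E <= cs * INR #|E|)%R) ->
  (* deterministic base case: O(m' alpha'^7 log n') time *)
  (forall (V : finType) (E : {set {set V}}), simple_graph E ->
     (bcd V E <= cd * INR #|E| * INR (arboricity E) ^ 7 * log2 (INR #|V|))%R) ->
  (* randomized base case: O(m' alpha' log n') expected time *)
  (forall (V : finType) (E : {set {set V}}), simple_graph E ->
     (bcr V E <= cr * INR #|E| * INR (arboricity E) * log2 (INR #|V|))%R) ->
  exists C : R,
  forall (V : finType) (E : {set {set V}}) (eps : R),
    simple_graph E ->
    (0 < arboricity E)%N ->
    (/ INR (arboricity E) <= eps < 1)%R ->
    (forall phi p t,
       aec_run oc sc bcd E (h_param eps (arboricity E)) phi p t ->
       (exists k, proper_edge_coloring E phi k /\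
                  (INR k <= INR (max_deg E) + eps * INR (arboricity E))%R) /\
       (t <= C * (INR #|E| * log2 (INR #|V|) / eps ^ 7))%R) /\
    (forall phi p t,
       aec_run oc sc bcr E (h_param eps (arboricity E)) phi p t ->
       (exists k, proper_edge_coloring E phi k /\
                  (INR k <= INR (max_deg E) + eps * INR (arboricity E))%R) /\
       (t <= C * (INR #|E| * log2 (INR #|V|) / eps))%R).
Proof.
move=> oc sc bcd bcr co cs cd cr oc_le sc_le bcd_le bcr_le.
exists (Rmax co 0 + Rmax cs 0 + Rmax cd 0 * 28 ^ 7 + Rmax cr 0 * 28)%R.
move=> V E eps simpleE a_gt0 eps_range.
have [cd_ge0 cr_ge0] : (0 <= Rmax cd 0 /\ 0 <= Rmax cr 0)%R by split; exact: Rmax_r.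
split=> phi p t run; (split; first exact: aec_run_colors a_gt0 (proj1 eps_range) run).
  apply: aec_run_time_le simpleE a_gt0 eps_range (oc_le V E simpleE) (sc_le V)
           (bcd_le V) _ run.
  have : (0 <= 28 ^ 7)%R by apply: pow_le; lra.
  lra.
rewrite -[eps in (_ / eps)%R]pow_1.
apply: aec_run_time_le simpleE a_gt0 eps_range (oc_le V E simpleE) (sc_le V) _ _ run.
  by move=> E' simpleE'; rewrite pow_1; exact: bcr_le.
by rewrite pow_1; lra.
Qed.
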